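(* Let $V=\{1,\dots,n\}$ be the node set of a directed graph and, for each realization $z$ (a random simulation of an Independent Cascade process), let $P_v^z\subseteq V$ be the set of nodes reachable from $v$. Define $g_z(\mathbf{x})=\sum_{v\in V}\frac1n\big(1-\prod_{i\in P_v^z}(1-x_i)\big)$ and $f_z(\mathbf{x})=h(g_z(\mathbf{x}))$ with $h(s)=\log(1+s)$, and $f(\mathbf{x})=\mathbb{E}_{z\sim P}[f_z(\mathbf{x})]$. Let $\hat h^L(s)=\sum_{\ell=0}^L\frac{h^{(\ell)}(1/2)}{\ell!}(s-1/2)^\ell$ and $\hat f_z^L(\mathbf{x})=\hat h^L(g_z(\mathbf{x}))$. Let $G_z$ be the multilinear relaxation of $f_z$ and $\widehat{\nabla G_z^L}$ the polynomial estimator built from $\hat f_z^L$. Then for all $\mathbf{y}\in[0,1]^n$, $$\big\|\nabla G_z(\mathbf{y})-\widehat{\nabla G_z^L}(\mathbf{y})\big\|_2\le\frac{\sqrt n}{(L+1)2^L}.$$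
   Context: $G_z(\mathbf{y})=\mathbb{E}_{\mathbf{x}\sim\mathbf{y}}[f_z(\mathbf{x})]$ where $\mathbf{x}\sim\mathbf{y}$ has independent Bernoulli$(y_i)$ coordinates. For a polynomial $p(\mathbf{y})=c_0+\sum_\ell c_\ell\prod_{i\in J_\ell}y_i^{k_i^\ell}$ ($k_i^\ell\ge1$), its multilinearization is $\dot p(\mathbf{y})=c_0+\sum_\ell c_\ell\prod_{i\in J_\ell}y_i$. The polynomial estimator is $\big(\widehat{\nabla G_z^L}(\mathbf{y})\big)_i=\dot{\hat f}{}_z^L([\mathbf{y}]_{+i})-\dot{\hat f}{}_z^L([\mathbf{y}]_{-i})$, where $[\mathbf{y}]_{+i}$, $[\mathbf{y}]_{-i}$ denote $\mathbf{y}$ with coordinate $i$ set to $1$, $0$. *)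

From HB Require Import structures.
From mathcomp Require Import all_boot all_order all_algebra.
From mathcomp Require Import all_classical all_reals all_analysis.
From mathcomp Require mpoly.
Import (canonicals, coercions, hints) mpoly.

Set Implicit Arguments.
Unset Strict Implicit.
Unset Printing Implicit Defensive.

Import Order.TTheory GRing.Theory Num.Theory.
Local Open Scope ring_scope.

Section Defs.
Variables (R : realType) (n : nat).

(* A realization z of the Independent Cascade process is its live-edge
   directed graph on V = 'I_n (nodes 0..n-1 stand for 1..n). *)
Definition reach (z : rel 'I_n) (v : 'I_n) : {set 'I_n} :=
  [set u | connect z v u].

Definition g_z (z : rel 'I_n) (x : 'I_n -> R) : R :=
  \sum_(v : 'I_n) n%:R^-1 * (1 - \prod_(i in reach z v) (1 - x i)).

Definition h (s : R) : R := ln (1 + s).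

Definition f_z (z : rel 'I_n) (x : 'I_n -> R) : R := h (g_z z x).

(* multilinear relaxation: G_z(y) = E_{x ~ y}[f_z(x)], x_i ~ Bernoulli(y_i)
   independent *)
Definition G_z (z : rel 'I_n) (y : 'rV[R]_n) : R :=
  \sum_(b : {ffun 'I_n -> bool})
     (\prod_(i : 'I_n) (if b i then y ord0 i else 1 - y ord0 i)) *
     f_z z (fun i => (b i)%:R).

Definition gradG (z : rel 'I_n) (y : 'rV[R]_n) : 'rV[R]_n :=
  \row_(i < n) derive (G_z z) y (delta_mx ord0 i).

Definition g_poly (z : rel 'I_n) : mpoly.mpoly n R :=
  \sum_(v : 'I_n) n%:R^-1 *:
     (1 - \prod_(i in reach z v) (1 - mpoly.mpolyX R (mpoly.mnm1 i))).

Definition taylor_coef (l : nat) : R := derive1n l h (2^-1) / (l`!)%:R.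

Definition hhat (L : nat) (s : R) : R :=
  \sum_(l < L.+1) taylor_coef l * (s - 2^-1) ^+ l.

Definition fhat_poly (z : rel 'I_n) (L : nat) : mpoly.mpoly n R :=
  \sum_(l < L.+1) taylor_coef l *: (g_poly z - mpoly.mpolyC n (2^-1)) ^+ l.

Definition multilin (p : mpoly.mpoly n R) : mpoly.mpoly n R :=
  \sum_(m <- mpoly.msupp p)
     mpoly.mcoeff m p *:
       mpoly.mpolyX R
         (mpoly.Multinom [tuple minn (mpoly.fun_of_multinom m i) 1 | i < n]).

Definition set_coord (y : 'rV[R]_n) (i : 'I_n) (b : R) : 'I_n -> R :=
  fun j => if j == i then b else y ord0 j.

Definition gradG_hat (z : rel 'I_n) (L : nat) (y : 'rV[R]_n) : 'rV[R]_n :=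
  \row_(i < n) (mpoly.meval (set_coord y i 1) (multilin (fhat_poly z L)) -
                mpoly.meval (set_coord y i 0) (multilin (fhat_poly z L))).

Definition norm2 (u : 'rV[R]_n) : R := Num.sqrt (\sum_(i < n) u ord0 i ^+ 2).

End Defs.

(* For the multilinear extension G of a function on {0,1}^n, the partial
   derivative in direction i is E_{[y]+i}[f] - E_{[y]-i}[f]; and since x^k = x
   on {0,1}, evaluating the multilinearization of a polynomial p at y is the
   same expectation E_y[p].  Hence every coordinate of the error is a
   difference of two expectations of h(g_z) - hhat^L(g_z) over {0,1}^n, where
   g_z takes values in [0,1].  For h(s) = log(1 + s), (hhat^L)' is the L-th
   partial sum of the geometric series of h'(s) = a / (1 - q(s)), with
   a = 2/3 and q(s) = -a (s - 1/2), so (h - hhat^L)'(s) = q(s)^L / (1 + s) is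
   at most a^L |s - 1/2|^L in absolute value on [0,1].  Cauchy's mean value
   theorem against (s - 1/2)^(L+1) turns this into
   |h - hhat^L| <= 1 / ((L+1) 2^(L+1)) on [0,1]; the factor sqrt n comes
   from the Euclidean norm. *)

From HB Require Import structures.
From mathcomp Require Import all_boot all_order all_algebra.
From mathcomp Require Import all_classical all_reals all_analysis.
From mathcomp Require mpoly.
Import (canonicals, coercions, hints) mpoly.
From mathcomp Require Import ring lra.

Set Implicit Arguments.
Unset Strict Implicit.
Unset Printing Implicit Defensive.

Import Order.TTheory GRing.Theory Num.Theory.
Local Open Scope ring_scope.
Import numFieldNormedType.Exports.

Section PowerBound.
Variable R : realType.

Lemma cauchy_pow_bound (F dF : R -> R) (a b c K : R) (L : nat) :
  a < b -> c \notin `]a, b[ ->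
  (forall x, x \in `[a, b] -> is_derive x 1 F (dF x)) ->
  (forall x, x \in `]a, b[ -> `|dF x| <= K * `|x - c| ^+ L) ->
  `|F b - F a| <= K / L.+1%:R * `|(b - c) ^+ L.+1 - (a - c) ^+ L.+1|.
Proof.
move=> ab cab dF_F dF_le.
(* Cauchy's mean value theorem against g, whose derivative dominates dF up to
   the factor K / (L + 1). *)
pose g (x : R) : R := (x - c) ^+ L.+1.
pose dg (x : R) : R := L.+1%:R * (x - c) ^+ L.
have in_ab x : x \in `]a, b[ -> x \in `[a, b].
  by rewrite !in_itv /= => /andP[/ltW -> /ltW ->].
have dg_g (x : R) : is_derive x 1 g (dg x).
  have := is_deriveX L.+1 (is_deriveB (is_derive_id x 1) (is_derive_cst c x 1)).
  by rewrite exprfctE subr0 scaler1.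
have cont (f df : R -> R) : (forall x, x \in `[a, b] -> is_derive x 1 f (df x)) ->
    {within `[a, b], continuous f}%classic.
  move=> D; apply: continuous_in_subspaceT => x /set_mem /D Dx.
  exact/differentiable_continuous/derivable1_diffP.
have xc_neq0 x : x \in `]a, b[ -> x - c != 0.
  by move=> xab; rewrite subr_eq0; apply: contraNneq cab => <-.
have dg_neq0 x : x \in `]a, b[ -> dg x != 0.
  by move=> /xc_neq0 xc; rewrite mulf_neq0 ?pnatr_eq0 ?expf_neq0.
have fdF x : x \in `]a, b[ -> is_derive x 1 F (dF x) by move/in_ab; exact: dF_F.
have [x xab] := cauchy_MVT ab (cont _ _ dF_F) (cont g dg (fun x _ => dg_g x))
  fdF (fun x _ => dg_g x) dg_neq0.
have gba_neq0 : g b - g a != 0.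
  exact: differentiable_subr_neq0 ab (cont g dg (fun x _ => dg_g x))
    (fun x _ => dg_g x) dg_neq0.
move=> /(congr1 ( *%R^~ (g b - g a))); rewrite /= divfK // => <-.
rewrite normrM ler_wpM2r // normrM normfV /dg normrM normr_nat normrX.
rewrite ler_pdivrMr; last first.
  by rewrite mulr_gt0 // exprn_gt0 // normr_gt0 xc_neq0.
by rewrite mulrA divfK ?pnatr_eq0 //; exact: dF_le.
Qed.

Lemma derive_pow_bound (F dF : R -> R) (a b c K s : R) (L : nat) :
  (forall x, x \in `[a, b] -> is_derive x 1 F (dF x)) ->
  (forall x, x \in `[a, b] -> `|dF x| <= K * `|x - c| ^+ L) ->
  c \in `[a, b] -> s \in `[a, b] -> F c = 0 ->
  `|F s| <= K / L.+1%:R * `|s - c| ^+ L.+1.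
Proof.
move=> dF_F dF_le cab sab Fc0.
(* The premises of cauchy_pow_bound are built before applying it: [is_derive]
   is a class, and leaving it as a hole makes [apply:] start an instance search
   that does not terminate. *)
have restrict u v : u \in `[a, b] -> v \in `[a, b] ->
    (forall x, x \in `[u, v] -> is_derive x 1 F (dF x)) /\
    (forall x, x \in `]u, v[ -> `|dF x| <= K * `|x - c| ^+ L).
  move=> uab vab; have sub x : x \in `[u, v] -> x \in `[a, b].
    move: uab vab; rewrite !in_itv /= => /andP[au ub] /andP[av vb] /andP[ux xv].
    by rewrite (le_trans au ux) (le_trans xv vb).
  split=> [x /sub|x xuv]; first exact: dF_F.
  by apply/dF_le/sub; move: xuv; rewrite !in_itv /= => /andP[/ltW -> /ltW ->].
case: (ltgtP s c) => [sc|cs|->]; last by rewrite Fc0 normr0 subrr normr0 expr0n mulr0.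
- have -> : `|F s| = `|F c - F s| by rewrite Fc0 sub0r normrN.
  have -> : `|s - c| ^+ L.+1 = `|(c - c) ^+ L.+1 - (s - c) ^+ L.+1|.
    by rewrite subrr expr0n sub0r normrN normrX.
  have c_notin : c \notin `]s, c[ by rewrite in_itv /= ltxx andbF.
  have [dF_F' dF_le'] := restrict s c sab cab.
  exact: cauchy_pow_bound sc c_notin dF_F' dF_le'.
- have -> : `|F s| = `|F s - F c| by rewrite Fc0 subr0.
  have -> : `|s - c| ^+ L.+1 = `|(s - c) ^+ L.+1 - (c - c) ^+ L.+1|.
    by rewrite subrr expr0n subr0 normrX.
  have c_notin : c \notin `]c, s[ by rewrite in_itv /= ltxx.
  have [dF_F' dF_le'] := restrict c s cab sab.
  exact: cauchy_pow_bound cs c_notin dF_F' dF_le'.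
Qed.

End PowerBound.

Section LogTaylor.
Variable R : realType.

Let a : R := (1 + 2^-1)^-1.

Lemma is_derive_1Dx (x : R) : is_derive x 1 (fun y : R => 1 + y) 1.
Proof.
by have := is_deriveD (is_derive_cst (1 : R) x 1) (is_derive_id x 1); rewrite add0r.
Qed.

Lemma is_derive_h (x : R) : -1 < x -> is_derive x 1 (@h R) (1 + x)^-1.
Proof.
move=> x_gt; move: (is_derive_1Dx x) => /(is_derive1_comp (is_derive1_ln _)).
by rewrite mulr1; apply; lra.
Qed.

Lemma derive1n_h (l : nat) (x : R) : -1 < x ->
  derive1n l.+1 (@h R) x = (-1) ^+ l * l`!%:R * (1 + x)^-1 ^+ l.+1.
Proof.
elim: l x => [|l IH] x x_gt.
  have D := is_derive_h x_gt.
  by rewrite derive1n1 derive1E derive_val fact0 !mulr1 expr1 mul1r.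
have near_IH : \forall y \near x,
    derive1n l.+1 (@h R) y = (-1) ^+ l * l`!%:R * (1 + y)^-1 ^+ l.+1.
  have : x \in `]-1, +oo[ by rewrite in_itv /= x_gt.
  by move/near_in_itvoy; apply: filterS => y; rewrite in_itv /= andbT; exact: IH.
rewrite [LHS]derive1E (near_eq_derive (1 : R) near_IH).
have x1_neq0 : 1 + x != 0 by rewrite gt_eqF //; lra.
have := is_deriveZ ((-1) ^+ l * l`!%:R) (is_deriveX l.+1 (is_deriveV x1_neq0 (is_derive_1Dx x))).
rewrite exprfctE => D; rewrite derive_val /GRing.scale /= factS natrM.
by rewrite !exprS; field.
Qed.

Lemma taylor_coefS (l : nat) :
  taylor_coef R l.+1 = (-1) ^+ l * a ^+ l.+1 / l.+1%:R.
Proof.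
rewrite /taylor_coef derive1n_h; last by lra.
rewrite factS natrM; field.
by rewrite addrC natr1 !pnatr_eq0 -!lt0n fact_gt0.
Qed.

Lemma hhat_half (L : nat) : hhat L (2^-1 : R) = h (2^-1).
Proof.
rewrite /hhat big_ord_recl subrr expr0 mulr1 big1 ?addr0; last first.
  by move=> i _; rewrite expr0n mulr0.
by rewrite /taylor_coef fact0 divr1.
Qed.

Lemma is_derive_hhat (L : nat) (x : R) : -1 < x ->
  is_derive x 1 (hhat L) ((1 - (- (a * (x - 2^-1))) ^+ L) / (1 + x)).
Proof.
move=> x_gt; set q := - (a * (x - 2^-1)).
have -> : hhat L = \sum_(l < L.+1) (fun s => taylor_coef R l * (s - 2^-1) ^+ l).
  by apply/funext => s; rewrite fct_sumE.
have geom : \sum_(l < L.+1) taylor_coef R l * (l%:R * (x - 2^-1) ^+ l.-1)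
    = a * \sum_(k < L) q ^+ k.
  rewrite big_ord_recl mul0r mulr0 add0r big_distrr; apply: eq_bigr => k _.
  rewrite taylor_coefS lift0 /= /q [(- (a * _)) ^+ _]exprNn exprMn exprS.
  by field; rewrite addrC natr1 pnatr_eq0.
have -> : (1 - q ^+ L) / (1 + x) = \sum_(l < L.+1) taylor_coef R l * (l%:R * (x - 2^-1) ^+ l.-1).
  rewrite geom -[1 - _]opprB subrX1 -mulNr opprB.
  have -> : 1 - q = (1 + x) * a by rewrite /q /a; field; lra.
  by field; lra.
apply: is_derive_sum => l.
have := is_deriveZ (taylor_coef R l)
  (is_deriveX l (is_deriveB (is_derive_id x 1) (is_derive_cst (2^-1 : R) x 1))).
by rewrite exprfctE subr0 scaler1.
Qed.

Lemma is_derive_h_sub_hhat (L : nat) (x : R) : -1 < x ->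
  is_derive x 1 (fun s => h s - hhat L s) ((- (a * (x - 2^-1))) ^+ L / (1 + x)).
Proof.
move=> x_gt; set q := - (a * (x - 2^-1)).
have -> : q ^+ L / (1 + x) = (1 + x)^-1 - (1 - q ^+ L) / (1 + x) by field; lra.
exact: is_deriveB (is_derive_h x_gt) (is_derive_hhat L x_gt).
Qed.

Lemma h_sub_hhat_bound (L : nat) (s : R) : 0 <= s <= 1 ->
  `|h s - hhat L s| <= ((L.+1)%:R * 2 ^+ L.+1)^-1.
Proof.
move=> s01.
have a_ge0 : 0 <= a by rewrite /a invr_ge0; lra.
have a_le1 : a <= 1 by rewrite /a invf_le1; lra.
have in01 (x : R) : x \in `[0, 1] -> 0 <= x <= 1 by rewrite in_itv.
have deriv (x : R) : x \in `[0, 1] -> is_derive x 1 (fun s => h s - hhat L s)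
    ((- (a * (x - 2^-1))) ^+ L / (1 + x)).
  by move=> /in01 x01; apply: is_derive_h_sub_hhat; lra.
have deriv_le (x : R) : x \in `[0, 1] ->
    `|(- (a * (x - 2^-1))) ^+ L / (1 + x)| <= a ^+ L * `|x - 2^-1| ^+ L.
  move=> /in01 x01.
  rewrite normrM normrX normrN normrM (ger0_norm a_ge0) exprMn normfV.
  rewrite [`|1 + x|]ger0_norm; last by lra.
  rewrite ler_pdivrMr; last by lra.
  by rewrite ler_peMr ?mulr_ge0 ?exprn_ge0 //; lra.
have half_in : 2^-1 \in `[0, 1 : R] by rewrite in_itv /=; apply/andP; split; lra.
have s_in : s \in `[0, 1] by rewrite in_itv.
have F0 : h (2^-1 : R) - hhat L (2^-1 : R) = 0 by rewrite hhat_half subrr.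
apply: le_trans (derive_pow_bound deriv deriv_le half_in s_in F0) _.
rewrite invfM -exprVn ler_pM ?mulr_ge0 ?invr_ge0 ?exprn_ge0 //.
  by rewrite -[leRHS]mul1r ler_wpM2r ?invr_ge0 ?exprn_ile1.
by rewrite lerXn2r ?nnegrE ?invr_ge0 // ler_norml; lra.
Qed.

End LogTaylor.

Section BernoulliMean.
Variables (R : comPzRingType) (n : nat).
Implicit Types (y : 'I_n -> R) (b : {ffun 'I_n -> bool}) (F : {ffun 'I_n -> bool} -> R).

Definition bool_point b : 'I_n -> R := fun i => (b i)%:R.

Definition bernoulli_weight y b : R := \prod_i (if b i then y i else 1 - y i).

Definition bernoulli_mean y F : R := \sum_b bernoulli_weight y b * F b.

Lemma sum_bernoulli_weight y : \sum_b bernoulli_weight y b = 1.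
Proof.
rewrite /bernoulli_weight -(bigA_distr_bigA (fun i (c : bool) => if c then y i else 1 - y i)).
by apply: big1 => i _; rewrite big_bool /= subrKC.
Qed.

Lemma bernoulli_meanB y F1 F2 :
  bernoulli_mean y F1 - bernoulli_mean y F2 = bernoulli_mean y (fun b => F1 b - F2 b).
Proof. by rewrite /bernoulli_mean -sumrB; apply: eq_bigr => b _; rewrite mulrBr. Qed.

Lemma bernoulli_mean_monomial y (m : mpoly.multinom n) :
  bernoulli_mean y (fun b => \prod_i bool_point b i ^+ m i) = \prod_i y i ^+ minn (m i) 1.
Proof.
rewrite /bernoulli_mean /bernoulli_weight /=.
under eq_bigr do rewrite -big_split /=.
rewrite -(bigA_distr_bigA (fun i (c : bool) =>
  (if c then y i else 1 - y i) * (c%:R : R) ^+ m i)).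
apply: eq_bigr => i _; rewrite big_bool /= expr1n mulr1 expr0n.
by case: (m i) => [|k] /=; rewrite ?mulr1 ?mulr0 ?addr0 ?subrKC.
Qed.

End BernoulliMean.

Arguments bool_point {R n}.

Section BernoulliMeanBound.
Variables (R : numDomainType) (n : nat).
Implicit Types (y : 'I_n -> R) (b : {ffun 'I_n -> bool}) (F : {ffun 'I_n -> bool} -> R).

Lemma bernoulli_weight_ge0 y b : (forall i, 0 <= y i <= 1) -> 0 <= bernoulli_weight y b.
Proof.
move=> y01; apply: prodr_ge0 => i _; have /andP[y_ge0 y_le1] := y01 i.
by case: (b i); rewrite ?subr_ge0.
Qed.

Lemma ler_norm_bernoulli_mean y F (M : R) :
  (forall i, 0 <= y i <= 1) -> (forall b, `|F b| <= M) -> `|bernoulli_mean y F| <= M.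
Proof.
move=> y01 F_le; apply: le_trans (ler_norm_sum _ _ _) _.
rewrite -[leRHS]mul1r -(sum_bernoulli_weight y) mulr_suml.
apply: ler_sum => b _; rewrite normrM ger0_norm ?bernoulli_weight_ge0 //.
by rewrite ler_wpM2l ?bernoulli_weight_ge0.
Qed.

End BernoulliMeanBound.

Section MultilinearExtension.
Variables (R : realType) (n : nat).
Implicit Types (F : {ffun 'I_n -> bool} -> R).

Lemma meval_multilin (y : 'I_n -> R) (p : mpoly.mpoly n R) :
  mpoly.meval y (multilin p) = bernoulli_mean y (fun b => mpoly.meval (bool_point b) p).
Proof.
rewrite /multilin raddf_sum /bernoulli_mean /=.
under [RHS]eq_bigr => b _ do rewrite mpoly.mevalE big_distrr /=.
rewrite exchange_big /=; apply: eq_bigr => m _.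
rewrite mpoly.mevalZ mpoly.mevalX.
rewrite (eq_bigr (fun i => y i ^+ minn (m i) 1)) => [|i _]; last by rewrite mpoly.mnmE.
rewrite -bernoulli_mean_monomial big_distrr; apply: eq_bigr => b _.
by rewrite mulrCA.
Qed.

Lemma bernoulli_mean_set_coord (Y : 'rV[R]_n) i F :
  bernoulli_mean (Y ord0) F = Y ord0 i * bernoulli_mean (set_coord Y i 1) F
                              + (1 - Y ord0 i) * bernoulli_mean (set_coord Y i 0) F.
Proof.
rewrite /bernoulli_mean !big_distrr -big_split /=; apply: eq_bigr => b _.
have weightE y : bernoulli_weight y b = (if b i then y i else 1 - y i) *
    \prod_(j < n | j != i) (if b j then y j else 1 - y j).
  by rewrite /bernoulli_weight (bigD1 i).
have other c : \prod_(j < n | j != i) (if b j then set_coord Y i c j else 1 - set_coord Y i c j)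
    = \prod_(j < n | j != i) (if b j then Y ord0 j else 1 - Y ord0 j).
  by apply: eq_bigr => j; rewrite /set_coord => /negbTE ->.
rewrite !weightE !other /set_coord eqxx.
by case: (b i); ring.
Qed.

Lemma derive_bernoulli_mean F (Y : 'rV[R]_n) i :
  derive (fun Y' : 'rV[R]_n => bernoulli_mean (Y' ord0) F) Y (delta_mx ord0 i)
  = bernoulli_mean (set_coord Y i 1) F - bernoulli_mean (set_coord Y i 0) F.
Proof.
set A := bernoulli_mean (set_coord Y i 1) F.
set B := bernoulli_mean (set_coord Y i 0) F.
have shiftE (t c : R) : set_coord (t *: delta_mx ord0 i + Y) i c = set_coord Y i c.
  apply/funext => j; rewrite /set_coord !mxE.
  by case: (eqVneq j i); rewrite ?andbF ?mulr0 ?add0r.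
have affine (t : R) : bernoulli_mean ((t *: delta_mx ord0 i + Y) ord0) F
    - bernoulli_mean (Y ord0) F = t * (A - B).
  rewrite !(bernoulli_mean_set_coord _ i) !shiftE -/A -/B !mxE !eqxx mulr1.
  by ring.
rewrite /derive; apply: (lim_near_cst (@Rhausdorff R)); near=> t.
have t_neq0 : t != 0 by near: t; exact: nbhs_dnbhs_neq.
by rewrite /= affine /GRing.scale /= mulrA mulVf // mul1r.
Unshelve. all: by end_near.
Qed.

End MultilinearExtension.

Section InfluenceObjective.
Variables (R : realType) (n : nat) (z : rel 'I_n).

Lemma g_z_ge0_le1 (x : 'I_n -> R) : (forall i, 0 <= x i <= 1) -> 0 <= g_z z x <= 1.
Proof.
move=> x01.
have prod01 (v : 'I_n) : 0 <= \prod_(i in reach z v) (1 - x i) <= 1.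
  apply/andP; split; first by apply: prodr_ge0 => i _; rewrite subr_ge0; case/andP: (x01 i).
  by apply: prodr_ile1 => i _; rewrite subr_ge0 lerBlDr lerDl; case/andP: (x01 i) => -> ->.
have term01 (v : 'I_n) : 0 <= n%:R^-1 * (1 - \prod_(i in reach z v) (1 - x i)) <= n%:R^-1.
  have /andP[p_ge0 p_le1] := prod01 v.
  rewrite mulr_ge0 ?invr_ge0 ?ler0n ?subr_ge0 //=.
  by rewrite ler_piMr ?invr_ge0 ?ler0n // lerBlDr lerDl.
apply/andP; split; first by apply: sumr_ge0 => v _; case/andP: (term01 v).
apply: le_trans (_ : \sum_(v : 'I_n) n%:R^-1 <= 1).
  by apply: ler_sum => v _; case/andP: (term01 v).
rewrite sumr_const card_ord; case: n => [|k]; first by rewrite mulr0n ler01.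
by rewrite -[_^-1 *+ _]mulr_natr mulVf ?pnatr_eq0.
Qed.

Lemma meval_g_poly (x : 'I_n -> R) : mpoly.meval x (g_poly R z) = g_z z x.
Proof.
rewrite /g_poly /g_z raddf_sum /=; apply: eq_bigr => v _.
rewrite mpoly.mevalZ rmorphB rmorph1 rmorph_prod /=; congr (_ * (_ - _)).
by apply: eq_bigr => i _; rewrite rmorphB rmorph1; congr (_ - _); exact: mpoly.mevalXU.
Qed.

Lemma meval_fhat_poly (L : nat) (x : 'I_n -> R) :
  mpoly.meval x (fhat_poly R z L) = hhat L (g_z z x).
Proof.
rewrite /fhat_poly /hhat raddf_sum /=; apply: eq_bigr => l _.
by rewrite mpoly.mevalZ rmorphXn rmorphB /= mpoly.mevalC meval_g_poly.
Qed.

End InfluenceObjective.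

Lemma norm2_le_sqrt_dim (R : realType) (n : nat) (u : 'rV[R]_n) (c : R) :
  0 <= c -> (forall i, `|u ord0 i| <= c) -> norm2 u <= Num.sqrt n%:R * c.
Proof.
move=> c_ge0 u_le; rewrite /norm2 -(ger0_norm c_ge0) -sqrtr_sqr -sqrtrM ?ler0n //.
rewrite ler_sqrt ?mulr_ge0 ?ler0n ?sqr_ge0 //.
apply: le_trans (_ : \sum_(i < n) c ^+ 2 <= _); last by rewrite sumr_const card_ord mulr_natl.
by apply: ler_sum => i _; rewrite -real_normK ?num_real // lerXn2r ?nnegrE ?normr_ge0 ?u_le.
Qed.

Section GradientEstimator.
Variables (R : realType) (n : nat) (z : rel 'I_n) (L : nat).

Let err (b : {ffun 'I_n -> bool}) : R :=
  h (g_z z (bool_point b)) - hhat L (g_z z (bool_point b)).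

Lemma gradG_sub_gradG_hatE (y : 'rV[R]_n) (i : 'I_n) :
  (gradG z y - gradG_hat z L y) ord0 i =
  bernoulli_mean (set_coord y i 1) err - bernoulli_mean (set_coord y i 0) err.
Proof.
have errE c : bernoulli_mean (set_coord y i c) err =
    bernoulli_mean (set_coord y i c) (fun b => f_z z (bool_point b)) -
    bernoulli_mean (set_coord y i c) (fun b => mpoly.meval (bool_point b) (fhat_poly R z L)).
  by rewrite bernoulli_meanB; apply: eq_bigr => b _; rewrite meval_fhat_poly.
rewrite !mxE derive_bernoulli_mean !meval_multilin !errE.
by ring.
Qed.

Lemma gradG_sub_gradG_hat_bound (y : 'rV[R]_n) (i : 'I_n) :
  (forall j, 0 <= y ord0 j <= 1) ->
  `|(gradG z y - gradG_hat z L y) ord0 i| <= ((L.+1)%:R * 2 ^+ L)^-1.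
Proof.
move=> y01.
have bool01 (b : {ffun 'I_n -> bool}) j : 0 <= (bool_point b j : R) <= 1.
  by rewrite /bool_point; case: (b j); rewrite lexx ler01.
have err_le b : `|err b| <= ((L.+1)%:R * 2 ^+ L.+1)^-1.
  exact: h_sub_hhat_bound (g_z_ge0_le1 z (bool01 b)).
have set_coord01 (c : R) : 0 <= c <= 1 -> forall j, 0 <= set_coord y i c j <= 1.
  by move=> c01 j; rewrite /set_coord; case: (j == i).
have -> : ((L.+1)%:R * 2 ^+ L)^-1 =
    ((L.+1)%:R * 2 ^+ L.+1)^-1 + ((L.+1)%:R * 2 ^+ L.+1)^-1 :> R.
  by rewrite exprS; field; rewrite expf_neq0 ?pnatr_eq0 // addrC natr1 pnatr_eq0.
rewrite gradG_sub_gradG_hatE; apply: le_trans (ler_normB _ _) (lerD _ _);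
  by apply: ler_norm_bernoulli_mean err_le; apply: set_coord01; rewrite ?lexx ?ler01.
Qed.

End GradientEstimator.

Theorem theorem4 (R : realType) (n : nat) (z : rel 'I_n) (L : nat)
    (y : 'rV[R]_n) :
  (forall i : 'I_n, 0 <= y ord0 i <= 1) ->
  norm2 (gradG z y - gradG_hat z L y)
    <= Num.sqrt (n%:R : R) / ((L.+1)%:R * 2 ^+ L).
Proof.
move=> y01; apply: norm2_le_sqrt_dim => [|i].
  by rewrite invr_ge0 mulr_ge0 ?ler0n ?exprn_ge0.
exact: gradG_sub_gradG_hat_bound.
Qed.
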